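(* Let $p>0$, $x\ge0$, $0<y<1$, and $q>1$. Define $$\bar c_{p,q}=\frac{p+q-1}{q}\,(1-y)\,\frac{M(p+q,p,xy/2)}{M(p+q-1,p,xy/2)}.$$ Then both $y_k=B_{p,k}(x,y)$ and $y_k=\bar B_{p,k}(x,y)$ satisfy $$y_{q+1}-(1+\bar c_{p,q})\,y_q+\bar c_{p,q}\,y_{q-1}=0 .$$
   Context: For $p,q>0$ and $0\le y\le 1$, $I_y(p,q)=\frac{1}{B(p,q)}\int_0^y t^{p-1}(1-t)^{q-1}\,dt$ is the regularized incomplete beta function, with $B(p,q)=\Gamma(p)\Gamma(q)/\Gamma(p+q)$. The cumulative noncentral beta distribution is $B_{p,q}(x,y)=e^{-x/2}\sum_{j=0}^\infty \frac{1}{j!}\left(\frac x2\right)^j I_y(p+j,q)$ for $x\ge0$, and its complement is $\bar B_{p,q}(x,y)=1-B_{p,q}(x,y)$. $M(a,b,z)=\sum_{n\ge0}\frac{(a)_n}{(b)_n}\frac{z^n}{n!}$ is Kummer's confluent hypergeometric function, and $(a)_n$ is the Pochhammer symbol. *)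

From Stdlib Require Import Reals Lra Arith ClassicalEpsilon.
Open Scope R_scope.

(* Value of a real quantity characterized by a predicate (default 0 if none). *)
Definition the_real (P : R -> Prop) : R := epsilon (inhabits 0) P.

Definition series_value (s : nat -> R) : R := the_real (infinite_sum s).

Definition improper_int_lim (f : R -> R) (a b l : R) : Prop :=
  forall eps, eps > 0 -> exists delta, delta > 0 /\
    forall u v, a < u < a + delta -> b - delta < v < b -> u < v ->
      exists pr : Riemann_integrable f u v, Rabs (RiemannInt pr - l) < eps.

Definition improper_int (f : R -> R) (a b : R) : R :=
  the_real (improper_int_lim f a b).

Definition beta_integrand (p q : R) (t : R) : R :=
  Rpower t (p - 1) * Rpower (1 - t) (q - 1).

Definition Beta (p q : R) : R := improper_int (beta_integrand p q) 0 1.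

Definition inc_beta_reg (y p q : R) : R :=
  improper_int (beta_integrand p q) 0 y / Beta p q.

Fixpoint pochhammer (a : R) (n : nat) : R :=
  match n with
  | O => 1
  | S m => pochhammer a m * (a + INR m)
  end.

Definition kummerM (a b z : R) : R :=
  series_value (fun n => pochhammer a n / pochhammer b n * z ^ n / INR (Factorial.fact n)).

Definition ncbeta (p q x y : R) : R :=
  exp (- x / 2) *
  series_value (fun j => / INR (Factorial.fact j) * (x / 2) ^ j * inc_beta_reg y (p + INR j) q).

Definition ncbeta_c (p q x y : R) : R := 1 - ncbeta p q x y.

Definition cbar (p q x y : R) : R :=
  (p + q - 1) / q * (1 - y) *
  (kummerM (p + q) p (x * y / 2) / kummerM (p + q - 1) p (x * y / 2)).

(* Write B_{p,b}(x,y) = e^(-x/2) S_b with S_b = sum_j (x/2)^j/j! I_y(p+j,b).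
   1. Improper integrals are handled as "window limits" of Riemann integrals over
      (u,v) as u -> a+, v -> b-; these limits are unique, linear and compatible with
      boundary terms F v - F u, which is all integration by parts needs.
   2. The beta integrals converge (domination + monotone supremum), and on windows
      t^(a-1)(1-t)^b = t^(a-1)(1-t)^(b-1) - t^a(1-t)^(b-1) together with integration
      by parts of (t^a(1-t)^b)' give, in the limit, B(a,b+1) = b/(a+b) B(a,b),
      B(a+1,b) = a/(a+b) B(a,b) and
      I_y(a,b+1) = I_y(a,b) + y^a(1-y)^b / (b B(a,b)).
   3. Hence, termwise, S_{b+1} - S_b = y^p(1-y)^b/(b B(p,b)) M(p+b,p,xy/2), and
      this step factor grows by (1-y)(p+b)/(b+1) from b to b+1.  With b = q-1, q
      this says exactly cbar_{p,q} (S_q - S_{q-1}) = S_{q+1} - S_q, i.e. the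
      recurrence for B; since its coefficients sum to zero it also holds for 1 - B. *)

From Stdlib Require Import Reals Lra ClassicalEpsilon Classical.
From Coquelicot Require Import Coquelicot.
Open Scope R_scope.

Lemma the_real_eq (P : R -> Prop) (l : R) :
  P l -> (forall l', P l' -> l' = l) -> the_real P = l.
Proof. intros Hl Huniq. unfold the_real. apply Huniq, epsilon_spec. now exists l. Qed.

Lemma series_value_eq (s : nat -> R) (l : R) : infinite_sum s l -> series_value s = l.
Proof.
  intro Hs. apply the_real_eq; [exact Hs|].
  intros l' Hs'. exact (uniqueness_sum s l' l Hs' Hs).
Qed.

Definition window_lim (G : R -> R -> R) (a b l : R) : Prop :=
  forall eps, 0 < eps -> exists d, 0 < d /\
    forall u v, a < u < a + d -> b - d < v < b -> u < v -> Rabs (G u v - l) < eps.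

Definition right_lim (F : R -> R) (a L : R) : Prop :=
  forall eps, 0 < eps -> exists d, 0 < d /\
    forall u, a < u < a + d -> Rabs (F u - L) < eps.

Definition left_lim (F : R -> R) (b L : R) : Prop :=
  forall eps, 0 < eps -> exists d, 0 < d /\
    forall v, b - d < v < b -> Rabs (F v - L) < eps.

Lemma window_exists (a b d : R) :
  a < b -> 0 < d -> exists u v, a < u < a + d /\ b - d < v < b /\ u < v.
Proof.
  intros Hab Hd. set (m := Rmin d ((b - a) / 2)).
  assert (0 < m) by (apply Rmin_glb_lt; lra).
  assert (m <= d) by apply Rmin_l. assert (m <= (b - a) / 2) by apply Rmin_r.
  exists (a + m / 2), (b - m / 2). lra.
Qed.

Lemma window_lim_unique (G : R -> R -> R) (a b l1 l2 : R) :
  a < b -> window_lim G a b l1 -> window_lim G a b l2 -> l1 = l2.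
Proof.
  intros Hab H1 H2. apply NNPP; intro Hne.
  set (e := Rabs (l1 - l2) / 2).
  assert (He : 0 < e) by (apply Rdiv_lt_0_compat; [apply Rabs_pos_lt; lra | lra]).
  destruct (H1 e He) as [d1 [Hd1 W1]]. destruct (H2 e He) as [d2 [Hd2 W2]].
  assert (Rmin d1 d2 <= d1) by apply Rmin_l. assert (Rmin d1 d2 <= d2) by apply Rmin_r.
  destruct (window_exists a b (Rmin d1 d2) Hab) as [u [v [Hu [Hv Huv]]]];
    [apply Rmin_glb_lt; lra|].
  specialize (W1 u v ltac:(lra) ltac:(lra) Huv). specialize (W2 u v ltac:(lra) ltac:(lra) Huv).
  assert (Rabs (l1 - l2) <= Rabs (G u v - l1) + Rabs (G u v - l2)).
  { replace (l1 - l2) with (- (G u v - l1) + (G u v - l2)) by ring.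
    eapply Rle_trans; [apply Rabs_triang|]. rewrite Rabs_Ropp. lra. }
  unfold e in *. lra.
Qed.

Lemma window_lim_ext (G1 G2 : R -> R -> R) (a b l : R) :
  (forall u v, a < u < v -> v < b -> G1 u v = G2 u v) ->
  window_lim G1 a b l -> window_lim G2 a b l.
Proof.
  intros Heq H eps He. destruct (H eps He) as [d [Hd W]]. exists d; split; [exact Hd|].
  intros u v Hu Hv Huv. rewrite <- Heq by lra. now apply W.
Qed.

Lemma window_lim_lincomb (G1 G2 : R -> R -> R) (a b l1 l2 c1 c2 : R) :
  window_lim G1 a b l1 -> window_lim G2 a b l2 ->
  window_lim (fun u v => c1 * G1 u v + c2 * G2 u v) a b (c1 * l1 + c2 * l2).
Proof.
  intros H1 H2 eps He.
  set (A := Rabs c1 + Rabs c2 + 1).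
  assert (HA : 1 <= A) by (unfold A; pose proof (Rabs_pos c1); pose proof (Rabs_pos c2); lra).
  set (e := eps / A).
  assert (He' : 0 < e) by (apply Rdiv_lt_0_compat; lra).
  assert (HeA : e * A = eps) by (unfold e; field; lra).
  destruct (H1 e He') as [d1 [Hd1 W1]]. destruct (H2 e He') as [d2 [Hd2 W2]].
  assert (Rmin d1 d2 <= d1) by apply Rmin_l. assert (Rmin d1 d2 <= d2) by apply Rmin_r.
  exists (Rmin d1 d2). split; [apply Rmin_glb_lt; lra|]. intros u v Hu Hv Huv.
  specialize (W1 u v ltac:(lra) ltac:(lra) Huv). specialize (W2 u v ltac:(lra) ltac:(lra) Huv).
  replace (c1 * G1 u v + c2 * G2 u v - (c1 * l1 + c2 * l2))
    with (c1 * (G1 u v - l1) + c2 * (G2 u v - l2)) by ring.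
  eapply Rle_lt_trans; [apply Rabs_triang|]. rewrite !Rabs_mult.
  pose proof (Rabs_pos c1). pose proof (Rabs_pos c2).
  assert (Rabs c1 * Rabs (G1 u v - l1) <= Rabs c1 * e) by (apply Rmult_le_compat_l; lra).
  assert (Rabs c2 * Rabs (G2 u v - l2) <= Rabs c2 * e) by (apply Rmult_le_compat_l; lra).
  unfold A in HeA. nra.
Qed.

Lemma window_lim_boundary (F : R -> R) (a b La Lb : R) :
  right_lim F a La -> left_lim F b Lb ->
  window_lim (fun u v => F v - F u) a b (Lb - La).
Proof.
  intros Ha Hb eps He.
  destruct (Ha (eps / 2) ltac:(lra)) as [d1 [Hd1 W1]].
  destruct (Hb (eps / 2) ltac:(lra)) as [d2 [Hd2 W2]].
  assert (Rmin d1 d2 <= d1) by apply Rmin_l. assert (Rmin d1 d2 <= d2) by apply Rmin_r.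
  exists (Rmin d1 d2). split; [apply Rmin_glb_lt; lra|]. intros u v Hu Hv _.
  specialize (W1 u ltac:(lra)). specialize (W2 v ltac:(lra)).
  replace (F v - F u - (Lb - La)) with ((F v - Lb) - (F u - La)) by ring.
  eapply Rle_lt_trans; [apply Rabs_triang|]. rewrite Rabs_Ropp. lra.
Qed.

Lemma left_lim_continuous (F : R -> R) (b : R) :
  continuity_pt F b -> left_lim F b (F b).
Proof.
  intros C eps He. destruct (C eps He) as [d [Hd W]]. exists d; split; [exact Hd|].
  intros v Hv. apply (W v). split; [split; [exact I | lra]|].
  simpl. unfold Rdist. rewrite Rabs_left1; lra.
Qed.

Lemma ex_RInt_inside (f : R -> R) (a b u v : R) :
  (forall t, a < t < b -> continuous f t) -> a < u -> u <= v -> v < b -> ex_RInt f u v.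
Proof.
  intros C Hu Huv Hv. apply (@ex_RInt_continuous R_CompleteNormedModule). intros t Ht.
  rewrite Rmin_left in Ht by lra. rewrite Rmax_right in Ht by lra. apply C; lra.
Qed.

Lemma improper_int_lim_window (f : R -> R) (a b l : R) :
  (forall t, a < t < b -> continuous f t) ->
  improper_int_lim f a b l <-> window_lim (RInt f) a b l.
Proof.
  intro C. split; intros H eps He; destruct (H eps He) as [d [Hd W]];
    exists d; split; try exact Hd; intros u v Hu Hv Huv.
  - destruct (W u v Hu Hv Huv) as [pr Hpr]. now rewrite (RInt_Reals f u v pr).
  - assert (I : ex_RInt f u v) by (apply (ex_RInt_inside f a b); auto; lra).
    exists (ex_RInt_Reals_0 _ _ _ I). rewrite <- RInt_Reals. now apply W.
Qed.

Lemma improper_int_eq (f : R -> R) (a b l : R) :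
  a < b -> (forall t, a < t < b -> continuous f t) ->
  window_lim (RInt f) a b l -> improper_int f a b = l.
Proof.
  intros Hab C H. apply the_real_eq.
  - now apply improper_int_lim_window.
  - intros l' H'. apply (window_lim_unique (RInt f) a b); auto.
    now apply improper_int_lim_window.
Qed.

Lemma window_lim_sup (f : R -> R) (a b M : R) :
  a < b -> (forall t, a < t < b -> continuous f t) -> (forall t, a < t < b -> 0 <= f t) ->
  (forall u v, a < u < v -> v < b -> RInt f u v <= M) ->
  exists l, window_lim (RInt f) a b l
    /\ (forall u v, a < u < v -> v < b -> RInt f u v <= l)
    /\ (forall M', (forall u v, a < u < v -> v < b -> RInt f u v <= M') -> l <= M').
Proof.
  intros Hab C P B.
  set (E := fun z => exists u v, a < u < v /\ v < b /\ z = RInt f u v).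
  assert (BE : bound E) by (exists M; intros z [u [v [h1 [h2 ->]]]]; apply B; auto).
  assert (NE : exists z, E z).
  { exists (RInt f (a + (b - a) / 3) (a + 2 * (b - a) / 3)).
    exists (a + (b - a) / 3), (a + 2 * (b - a) / 3). repeat split; lra. }
  destruct (completeness E BE NE) as [l [Hub Hlub]].
  exists l. split; [|split].
  - intros eps He.
    assert (exists z, E z /\ l - eps < z) as [z [[u0 [v0 [h1 [h2 ->]]]] Hz]].
    { apply NNPP; intro N. assert (l <= l - eps); [|lra]. apply Hlub. intros z Ez.
      apply Rnot_lt_le. intro L. apply N. eauto. }
    exists (Rmin (u0 - a) (b - v0)). split; [apply Rmin_glb_lt; lra|].
    intros u v Hu Hv Huv.
    assert (Rmin (u0 - a) (b - v0) <= u0 - a) by apply Rmin_l.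
    assert (Rmin (u0 - a) (b - v0) <= b - v0) by apply Rmin_r.
    assert (I1 : ex_RInt f u u0) by (apply (ex_RInt_inside f a b); [exact C|lra..]).
    assert (I2 : ex_RInt f u0 v0) by (apply (ex_RInt_inside f a b); [exact C|lra..]).
    assert (I3 : ex_RInt f v0 v) by (apply (ex_RInt_inside f a b); [exact C|lra..]).
    assert (Split : RInt f u v = RInt f u u0 + RInt f u0 v0 + RInt f v0 v).
    { rewrite <- (RInt_Chasles f u v0 v), <- (RInt_Chasles f u u0 v0); auto.
      apply (ex_RInt_Chasles f u u0 v0); auto. }
    assert (0 <= RInt f u u0) by (apply RInt_ge_0; auto; try lra; intros; apply P; lra).
    assert (0 <= RInt f v0 v) by (apply RInt_ge_0; auto; try lra; intros; apply P; lra).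
    assert (RInt f u v <= l) by (apply Hub; exists u, v; repeat split; lra).
    rewrite Rabs_left1; lra.
  - intros u v h1 h2. apply Hub. exists u, v; repeat split; lra.
  - intros M' HM. apply Hlub. intros z [u [v [h1 [h2 ->]]]]. apply HM; auto.
Qed.

(* [beta_kernel a b t = t^a (1-t)^b]; the beta integrand is [beta_kernel (p-1) (q-1)]
   and the kernel itself is the boundary term of integration by parts. *)
Definition beta_kernel (a b t : R) : R := Rpower t a * Rpower (1 - t) b.

Lemma Rpower_pos (x y : R) : 0 < Rpower x y.
Proof. apply exp_pos. Qed.

Lemma Rpower_base_1 (c : R) : Rpower 1 c = 1.
Proof. unfold Rpower. rewrite ln_1, Rmult_0_r. apply exp_0. Qed.

Lemma Rpower_le_1 (s c : R) : 0 < s <= 1 -> 0 <= c -> Rpower s c <= 1.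
Proof. intros Hs Hc. rewrite <- (Rpower_base_1 c). apply Rle_Rpower_l; lra. Qed.

Lemma exp_le_compat (a b : R) : a <= b -> exp a <= exp b.
Proof. intros [H | ->]; [left; now apply exp_increasing | apply Rle_refl]. Qed.

Lemma Rpower_right_lim_0 (c : R) : 0 < c -> right_lim (fun s => Rpower s c) 0 0.
Proof.
  intros Hc eps He. exists (Rpower eps (/ c)). split; [apply Rpower_pos|].
  intros s Hs. rewrite Rminus_0_r, Rabs_right by (left; apply Rpower_pos).
  replace eps with (Rpower (Rpower eps (/ c)) c).
  - apply exp_increasing, Rmult_lt_compat_l; [exact Hc|]. apply ln_increasing; lra.
  - rewrite Rpower_mult. replace (/ c * c) with 1 by (field; lra). now apply Rpower_1.
Qed.

Lemma Rpower_half_bound (s e : R) : / 2 <= s <= 1 -> Rpower s e <= exp (Rabs e * ln 2).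
Proof.
  intro Hs. apply exp_le_compat.
  assert (L1 : ln s <= 0) by (rewrite <- ln_1; apply ln_le; lra).
  assert (L2 : - ln 2 <= ln s) by (rewrite <- ln_Rinv by lra; apply ln_le; lra).
  eapply Rle_trans; [apply Rle_abs|]. rewrite Rabs_mult.
  apply Rmult_le_compat_l; [apply Rabs_pos|]. rewrite Rabs_left1; lra.
Qed.

Lemma derivable_pt_lim_Rpower_1m (s t : R) :
  t < 1 -> derivable_pt_lim (fun t => Rpower (1 - t) s) t (- (s * Rpower (1 - t) (s - 1))).
Proof.
  intro Ht.
  assert (H1 : derivable_pt_lim (fun t => 1 - t) t (0 - 1)).
  { apply (derivable_pt_lim_minus (fun _ => 1) (fun t => t)).
    - apply derivable_pt_lim_const.
    - apply derivable_pt_lim_id. }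
  replace (- (s * Rpower (1 - t) (s - 1))) with (s * Rpower (1 - t) (s - 1) * (0 - 1)) by ring.
  exact (derivable_pt_lim_comp (fun t => 1 - t) (fun z => Rpower z s) t _ _ H1
           (derivable_pt_lim_power (1 - t) s ltac:(lra))).
Qed.

Lemma derivable_pt_lim_beta_kernel (a b t : R) : 0 < t < 1 ->
  derivable_pt_lim (beta_kernel a b) t
    (a * Rpower t (a - 1) * Rpower (1 - t) b - b * Rpower t a * Rpower (1 - t) (b - 1)).
Proof.
  intro Ht.
  replace (a * Rpower t (a - 1) * Rpower (1 - t) b - b * Rpower t a * Rpower (1 - t) (b - 1))
    with (a * Rpower t (a - 1) * Rpower (1 - t) b + Rpower t a * - (b * Rpower (1 - t) (b - 1)))
    by ring.
  exact (derivable_pt_lim_mult (fun t => Rpower t a) (fun t => Rpower (1 - t) b) t _ _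
           (derivable_pt_lim_power t a ltac:(lra)) (derivable_pt_lim_Rpower_1m b t ltac:(lra))).
Qed.

Lemma continuous_of_derivable_pt_lim (f : R -> R) (x l : R) :
  derivable_pt_lim f x l -> continuous f x.
Proof.
  intro H. apply continuity_pt_filterlim, derivable_continuous_pt. now exists l.
Qed.

Lemma beta_integrand_continuous (a b t : R) : 0 < t < 1 -> continuous (beta_integrand a b) t.
Proof.
  intro Ht. exact (continuous_of_derivable_pt_lim _ _ _
                     (derivable_pt_lim_beta_kernel (a - 1) (b - 1) t Ht)).
Qed.

Lemma beta_integrand_pos (a b t : R) : 0 < beta_integrand a b t.
Proof. apply Rmult_lt_0_compat; apply Rpower_pos. Qed.

Lemma ex_RInt_beta (a b u v : R) : 0 < u -> u <= v -> v < 1 -> ex_RInt (beta_integrand a b) u v.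
Proof. apply ex_RInt_inside; intros; now apply beta_integrand_continuous. Qed.

(* On (0,1) the integrand is dominated by C (t^(a-1) + (1-t)^(b-1)): near each endpoint
   only one factor is singular, and the other one is bounded. *)
Lemma beta_integrand_dominated (a b : R) : exists C, 0 < C /\
  forall t, 0 < t < 1 -> beta_integrand a b t <= C * (Rpower t (a - 1) + Rpower (1 - t) (b - 1)).
Proof.
  set (C1 := exp (Rabs (a - 1) * ln 2)). set (C2 := exp (Rabs (b - 1) * ln 2)).
  assert (P1 : 0 < C1) by apply exp_pos. assert (P2 : 0 < C2) by apply exp_pos.
  exists (C1 + C2). split; [lra|]. intros t Ht. unfold beta_integrand.
  assert (X := Rpower_pos t (a - 1)). assert (Y := Rpower_pos (1 - t) (b - 1)).
  destruct (Rle_lt_dec t (/ 2)).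
  - assert (Rpower (1 - t) (b - 1) <= C2) by (apply Rpower_half_bound; lra). nra.
  - assert (Rpower t (a - 1) <= C1) by (apply Rpower_half_bound; lra). nra.
Qed.

Lemma dominating_continuous (a b t : R) : 0 < t < 1 ->
  continuous (fun t => Rpower t (a - 1) + Rpower (1 - t) (b - 1)) t.
Proof.
  intro Ht. apply (continuous_plus (fun t => Rpower t (a - 1)) (fun t => Rpower (1 - t) (b - 1))).
  - eapply continuous_of_derivable_pt_lim, derivable_pt_lim_power; lra.
  - eapply continuous_of_derivable_pt_lim, derivable_pt_lim_Rpower_1m; lra.
Qed.

Lemma RInt_dominating_le (a b u v : R) : 0 < a -> 0 < b -> 0 < u < v -> v < 1 ->
  RInt (fun t => Rpower t (a - 1) + Rpower (1 - t) (b - 1)) u v <= / a + / b.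
Proof.
  intros Ha Hb Huv Hv.
  set (g := fun t => Rpower t (a - 1) + Rpower (1 - t) (b - 1)).
  set (h := fun t => / a * Rpower t a - / b * Rpower (1 - t) b).
  assert (D : forall t, 0 < t < 1 -> derivable_pt_lim h t (g t)).
  { intros t Ht. unfold g.
    replace (Rpower t (a - 1) + Rpower (1 - t) (b - 1))
      with (/ a * (a * Rpower t (a - 1)) - / b * (- (b * Rpower (1 - t) (b - 1))))
      by (field; lra).
    apply (derivable_pt_lim_minus (mult_real_fct (/ a) (fun t => Rpower t a))
                                  (mult_real_fct (/ b) (fun t => Rpower (1 - t) b)));
      apply derivable_pt_lim_scal.
    - apply derivable_pt_lim_power; lra.
    - apply derivable_pt_lim_Rpower_1m; lra. }
  assert (FTC : is_RInt g u v (minus (h v) (h u))).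
  { apply (@is_RInt_derive R_CompleteNormedModule); intros t Ht;
      rewrite Rmin_left in Ht by lra; rewrite Rmax_right in Ht by lra.
    - apply is_derive_Reals, D; lra.
    - apply dominating_continuous; lra. }
  rewrite (is_RInt_unique _ _ _ _ FTC). unfold minus, plus, opp; simpl. unfold h.
  assert (Rpower v a <= 1) by (apply Rpower_le_1; lra).
  assert (Rpower (1 - u) b <= 1) by (apply Rpower_le_1; lra).
  assert (A3 := Rpower_pos u a). assert (A4 := Rpower_pos (1 - v) b).
  assert (0 < / a) by (apply Rinv_0_lt_compat; lra).
  assert (0 < / b) by (apply Rinv_0_lt_compat; lra).
  nra.
Qed.

Lemma beta_window_bounded (a b : R) : 0 < a -> 0 < b -> exists M,
  forall u v, 0 < u < v -> v < 1 -> RInt (beta_integrand a b) u v <= M.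
Proof.
  intros Ha Hb. destruct (beta_integrand_dominated a b) as [C [HC Dom]].
  exists (C * (/ a + / b)). intros u v Huv Hv.
  set (g := fun t => Rpower t (a - 1) + Rpower (1 - t) (b - 1)).
  assert (Ig : ex_RInt g u v)
    by (apply (ex_RInt_inside g 0 1); [intros; now apply dominating_continuous | lra..]).
  apply Rle_trans with (RInt (fun t => C * g t) u v).
  - apply RInt_le; [lra | apply ex_RInt_beta; lra | |].
    + apply (ex_RInt_scal (V := R_CompleteNormedModule)), Ig.
    + intros t Ht. apply Dom. lra.
  - replace (RInt (fun t => C * g t) u v) with (C * RInt g u v)
      by (symmetry; exact (RInt_scal (V := R_CompleteNormedModule) g u v C Ig)).
    apply Rmult_le_compat_l; [lra|]. apply RInt_dominating_le; lra.
Qed.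

Lemma Beta_spec (a b : R) : 0 < a -> 0 < b ->
  window_lim (RInt (beta_integrand a b)) 0 1 (Beta a b) /\ 0 < Beta a b /\
  (forall u v, 0 < u < v -> v < 1 -> RInt (beta_integrand a b) u v <= Beta a b).
Proof.
  intros Ha Hb. destruct (beta_window_bounded a b Ha Hb) as [M HM].
  destruct (window_lim_sup (beta_integrand a b) 0 1 M ltac:(lra)
              ltac:(intros; now apply beta_integrand_continuous)
              ltac:(intros; left; apply beta_integrand_pos) HM) as [l [L [U _]]].
  assert (E : Beta a b = l).
  { apply improper_int_eq; auto; [lra | intros; now apply beta_integrand_continuous]. }
  rewrite E. repeat split; auto.
  apply Rlt_le_trans with (RInt (beta_integrand a b) (1 / 3) (2 / 3)); [|apply U; lra].
  apply RInt_gt_0; [lra | intros; apply beta_integrand_pos |].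
  intros; apply beta_integrand_continuous; lra.
Qed.

Lemma inc_beta_spec (a b y : R) : 0 < a -> 0 < b -> 0 < y < 1 ->
  window_lim (RInt (beta_integrand a b)) 0 y (improper_int (beta_integrand a b) 0 y) /\
  0 <= improper_int (beta_integrand a b) 0 y <= Beta a b.
Proof.
  intros Ha Hb Hy. destruct (Beta_spec a b Ha Hb) as [_ [_ UB]].
  destruct (window_lim_sup (beta_integrand a b) 0 y (Beta a b) ltac:(lra)
              ltac:(intros; apply beta_integrand_continuous; lra)
              ltac:(intros; left; apply beta_integrand_pos)
              ltac:(intros u v H1 H2; apply UB; lra)) as [l [L [U LB]]].
  assert (E : improper_int (beta_integrand a b) 0 y = l).
  { apply improper_int_eq; auto; [lra | intros; apply beta_integrand_continuous; lra]. }
  rewrite E. repeat split; auto.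
  - apply Rle_trans with (RInt (beta_integrand a b) (y / 3) (2 * y / 3)); [|apply U; lra].
    apply RInt_ge_0; [lra | apply ex_RInt_beta; lra | intros; left; apply beta_integrand_pos].
  - apply LB. intros u v H1 H2; apply UB; lra.
Qed.

Lemma inc_beta_reg_bounds (y a b : R) : 0 < a -> 0 < b -> 0 < y < 1 ->
  0 <= inc_beta_reg y a b <= 1.
Proof.
  intros Ha Hb Hy. destruct (inc_beta_spec a b y Ha Hb Hy) as [_ [H1 H2]].
  destruct (Beta_spec a b Ha Hb) as [_ [BP _]]. unfold inc_beta_reg. split.
  - apply Rdiv_le_0_compat; lra.
  - apply Rmult_le_reg_r with (Beta a b); [exact BP|].
    unfold Rdiv. rewrite Rmult_assoc, Rinv_l by lra. lra.
Qed.

Lemma RInt_beta_split (a b u v : R) : 0 < u < v -> v < 1 ->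
  RInt (beta_integrand a (b + 1)) u v
  = RInt (beta_integrand a b) u v - RInt (beta_integrand (a + 1) b) u v.
Proof.
  intros Huv Hv.
  rewrite <- (RInt_minus (V := R_CompleteNormedModule)) by (apply ex_RInt_beta; lra).
  apply RInt_ext. intros t Ht. rewrite Rmin_left in Ht by lra. rewrite Rmax_right in Ht by lra.
  unfold beta_integrand.
  replace (b + 1 - 1) with ((b - 1) + 1) by ring. replace (a + 1 - 1) with ((a - 1) + 1) by ring.
  rewrite !Rpower_plus, !Rpower_1 by lra. unfold minus, plus, opp; simpl. ring.
Qed.

Lemma RInt_beta_by_parts (a b u v : R) : 0 < u < v -> v < 1 ->
  a * RInt (beta_integrand a (b + 1)) u v - b * RInt (beta_integrand (a + 1) b) u v
  = beta_kernel a b v - beta_kernel a b u.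
Proof.
  intros Huv Hv.
  set (dk := fun t => a * beta_integrand a (b + 1) t - b * beta_integrand (a + 1) b t).
  assert (FTC : is_RInt dk u v (minus (beta_kernel a b v) (beta_kernel a b u))).
  { apply (@is_RInt_derive R_CompleteNormedModule); intros t Ht;
      rewrite Rmin_left in Ht by lra; rewrite Rmax_right in Ht by lra.
    - apply is_derive_Reals. unfold dk, beta_integrand.
      replace (b + 1 - 1) with b by ring. replace (a + 1 - 1) with a by ring.
      replace (a * (Rpower t (a - 1) * Rpower (1 - t) b) - b * (Rpower t a * Rpower (1 - t) (b - 1)))
        with (a * Rpower t (a - 1) * Rpower (1 - t) b - b * Rpower t a * Rpower (1 - t) (b - 1))
        by ring.
      apply derivable_pt_lim_beta_kernel; lra.
    - apply (continuous_minus (fun t => a * beta_integrand a (b + 1) t)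
                              (fun t => b * beta_integrand (a + 1) b t));
        [apply (continuous_mult (fun _ => a)) | apply (continuous_mult (fun _ => b))];
        (apply continuous_const || (apply beta_integrand_continuous; lra)). }
  assert (Lin : is_RInt dk u v
     (a * RInt (beta_integrand a (b + 1)) u v - b * RInt (beta_integrand (a + 1) b) u v)).
  { apply (is_RInt_minus (V := R_CompleteNormedModule)
             (fun t => a * beta_integrand a (b + 1) t) (fun t => b * beta_integrand (a + 1) b t));
      apply (is_RInt_scal (V := R_CompleteNormedModule)), (RInt_correct (V := R_CompleteNormedModule));
      apply ex_RInt_beta; lra. }
  rewrite <- (is_RInt_unique _ _ _ _ Lin), (is_RInt_unique _ _ _ _ FTC). reflexivity.
Qed.

Lemma beta_kernel_right_lim_0 (a b : R) : 0 < a -> 0 <= b -> right_lim (beta_kernel a b) 0 0.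
Proof.
  intros Ha Hb eps He. destruct (Rpower_right_lim_0 a Ha eps He) as [d [Hd W]].
  exists (Rmin d 1). split; [apply Rmin_glb_lt; lra|]. intros u Hu.
  assert (Rmin d 1 <= d) by apply Rmin_l. assert (Rmin d 1 <= 1) by apply Rmin_r.
  specialize (W u ltac:(lra)). rewrite Rminus_0_r in *.
  unfold beta_kernel. rewrite Rabs_mult, (Rabs_right (Rpower (1 - u) b)) by (left; apply Rpower_pos).
  assert (Rpower (1 - u) b <= 1) by (apply Rpower_le_1; lra).
  pose proof (Rabs_pos (Rpower u a)). nra.
Qed.

Lemma beta_kernel_left_lim_1 (a b : R) : 0 <= a -> 0 < b -> left_lim (beta_kernel a b) 1 0.
Proof.
  intros Ha Hb eps He. destruct (Rpower_right_lim_0 b Hb eps He) as [d [Hd W]].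
  exists (Rmin d 1). split; [apply Rmin_glb_lt; lra|]. intros v Hv.
  assert (Rmin d 1 <= d) by apply Rmin_l. assert (Rmin d 1 <= 1) by apply Rmin_r.
  specialize (W (1 - v) ltac:(lra)). rewrite Rminus_0_r in *.
  unfold beta_kernel. rewrite Rabs_mult, (Rabs_right (Rpower v a)) by (left; apply Rpower_pos).
  assert (Rpower v a <= 1) by (apply Rpower_le_1; lra).
  pose proof (Rabs_pos (Rpower (1 - v) b)). nra.
Qed.

Lemma beta_relations (E a b l1 l2 l3 Phi : R) : 0 < E <= 1 -> 0 < a -> 0 < b ->
  window_lim (RInt (beta_integrand a (b + 1))) 0 E l1 ->
  window_lim (RInt (beta_integrand a b)) 0 E l2 ->
  window_lim (RInt (beta_integrand (a + 1) b)) 0 E l3 ->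
  left_lim (beta_kernel a b) E Phi ->
  l1 = l2 - l3 /\ a * l1 - b * l3 = Phi.
Proof.
  intros HE Ha Hb L1 L2 L3 LPhi. split.
  - apply (window_lim_unique (RInt (beta_integrand a (b + 1))) 0 E); [lra | exact L1 |].
    replace (l2 - l3) with (1 * l2 + (-1) * l3) by ring.
    eapply window_lim_ext; [|exact (window_lim_lincomb _ _ _ _ _ _ 1 (-1) L2 L3)].
    intros u v Huv Hv. rewrite RInt_beta_split by lra. ring.
  - apply (window_lim_unique (fun u v => beta_kernel a b v - beta_kernel a b u) 0 E); [lra| |].
    + replace (a * l1 - b * l3) with (a * l1 + (- b) * l3) by ring.
      eapply window_lim_ext; [|exact (window_lim_lincomb _ _ _ _ _ _ a (- b) L1 L3)].
      intros u v Huv Hv. rewrite <- RInt_beta_by_parts by lra. ring.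
    + replace Phi with (Phi - 0) by ring.
      apply window_lim_boundary; [apply beta_kernel_right_lim_0; lra | exact LPhi].
Qed.

Lemma Beta_recurrences (a b : R) : 0 < a -> 0 < b ->
  Beta a (b + 1) = b / (a + b) * Beta a b /\ Beta (a + 1) b = a / (a + b) * Beta a b.
Proof.
  intros Ha Hb.
  destruct (Beta_spec a (b + 1) Ha ltac:(lra)) as [L1 _].
  destruct (Beta_spec a b Ha Hb) as [L2 _].
  destruct (Beta_spec (a + 1) b ltac:(lra) Hb) as [L3 _].
  destruct (beta_relations 1 a b _ _ _ 0 ltac:(lra) Ha Hb L1 L2 L3
              (beta_kernel_left_lim_1 a b ltac:(lra) Hb)) as [R1 R2].
  assert (E1 : Beta a (b + 1) = b / (a + b) * Beta a b).
  { apply Rmult_eq_reg_r with (a + b); [|lra]. field_simplify; [|lra]. nra. }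
  split; [exact E1|]. replace (Beta (a + 1) b) with (Beta a b - Beta a (b + 1)) by lra.
  rewrite E1. field. lra.
Qed.

Definition inc_beta_step (a y b : R) : R := beta_kernel a b y / (b * Beta a b).

Lemma inc_beta_reg_succ (a b y : R) : 0 < a -> 0 < b -> 0 < y < 1 ->
  inc_beta_reg y a (b + 1) = inc_beta_reg y a b + inc_beta_step a y b.
Proof.
  intros Ha Hb Hy.
  destruct (inc_beta_spec a (b + 1) y Ha ltac:(lra) Hy) as [L1 _].
  destruct (inc_beta_spec a b y Ha Hb Hy) as [L2 _].
  destruct (inc_beta_spec (a + 1) b y ltac:(lra) Hb Hy) as [L3 _].
  assert (Ky : left_lim (beta_kernel a b) y (beta_kernel a b y)).
  { apply left_lim_continuous, derivable_continuous_pt.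
    exists (a * Rpower y (a - 1) * Rpower (1 - y) b - b * Rpower y a * Rpower (1 - y) (b - 1)).
    now apply derivable_pt_lim_beta_kernel. }
  destruct (beta_relations y a b _ _ _ _ ltac:(lra) Ha Hb L1 L2 L3 Ky) as [R1 R2].
  destruct (Beta_recurrences a b Ha Hb) as [B1 _]. destruct (Beta_spec a b Ha Hb) as [_ [BP _]].
  unfold inc_beta_reg, inc_beta_step. rewrite B1.
  set (J1 := improper_int (beta_integrand a (b + 1)) 0 y) in *.
  set (J2 := improper_int (beta_integrand a b) 0 y) in *.
  set (J3 := improper_int (beta_integrand (a + 1) b) 0 y) in *.
  assert (E : J1 = (b * J2 + beta_kernel a b y) / (a + b)).
  { apply Rmult_eq_reg_r with (a + b); [|lra]. field_simplify; [|lra]. nra. }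
  rewrite E. field. lra.
Qed.

Lemma pochhammer_pos (a : R) (j : nat) : 0 < a -> 0 < pochhammer a j.
Proof.
  intro Ha. induction j as [|j IH]; simpl; [lra|].
  apply Rmult_lt_0_compat; [exact IH|]. pose proof (pos_INR j). lra.
Qed.

Lemma fact_pos (j : nat) : 0 < INR (Factorial.fact j).
Proof. apply lt_0_INR, Factorial.lt_O_fact. Qed.

Lemma Beta_shift (a b : R) (j : nat) : 0 < a -> 0 < b ->
  Beta (a + INR j) b = Beta a b * pochhammer a j / pochhammer (a + b) j.
Proof.
  intros Ha Hb. induction j as [|j IH].
  - simpl. rewrite Rplus_0_r. field.
  - rewrite S_INR. replace (a + (INR j + 1)) with ((a + INR j) + 1) by ring.
    pose proof (pos_INR j).
    destruct (Beta_recurrences (a + INR j) b ltac:(lra) Hb) as [_ R]. rewrite R, IH. simpl.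
    pose proof (pochhammer_pos a j Ha). pose proof (pochhammer_pos (a + b) j ltac:(lra)).
    field. lra.
Qed.

Definition ncbeta_term (p x y b : R) (j : nat) : R :=
  / INR (Factorial.fact j) * (x / 2) ^ j * inc_beta_reg y (p + INR j) b.

Definition ncbeta_sum (p x y b : R) : R := series_value (ncbeta_term p x y b).

Lemma ncbeta_sum_spec (p x y b : R) : 0 < p -> 0 <= x -> 0 < y < 1 -> 0 < b ->
  infinite_sum (ncbeta_term p x y b) (ncbeta_sum p x y b).
Proof.
  intros Hp Hx Hy Hb.
  destruct (Rseries_CV_comp (ncbeta_term p x y b) (fun j => / INR (Factorial.fact j) * (x / 2) ^ j))
    as [l Hl].
  - intro j. unfold ncbeta_term.
    assert (0 <= / INR (Factorial.fact j) * (x / 2) ^ j).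
    { apply Rmult_le_pos; [left; apply Rinv_0_lt_compat, fact_pos | apply pow_le; lra]. }
    pose proof (inc_beta_reg_bounds y (p + INR j) b ltac:(pose proof (pos_INR j); lra) Hb Hy).
    nra.
  - destruct (exist_exp (x / 2)) as [l Hl]. now exists l.
  - unfold ncbeta_sum. now rewrite (series_value_eq _ l Hl).
Qed.

Definition kummer_term (a c z : R) (n : nat) : R :=
  pochhammer a n / pochhammer c n * z ^ n / INR (Factorial.fact n).

(* Termwise, raising b by one adds a Kummer term: by inc_beta_reg_succ and Beta_shift,
   the increment of I_y(p+j,b) is the one of I_y(p,b) times y^j (p+b)_j/(p)_j. *)
Lemma ncbeta_term_succ (p x y b : R) (j : nat) : 0 < p -> 0 < y < 1 -> 0 < b ->
  ncbeta_term p x y (b + 1) j - ncbeta_term p x y b j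
  = inc_beta_step p y b * kummer_term (p + b) p (x * y / 2) j.
Proof.
  intros Hp Hy Hb. unfold ncbeta_term. pose proof (pos_INR j).
  rewrite inc_beta_reg_succ by lra. unfold inc_beta_step, beta_kernel, kummer_term.
  rewrite Beta_shift, Rpower_plus, Rpower_pow by lra.
  destruct (Beta_spec p b Hp Hb) as [_ [BP _]].
  pose proof (pochhammer_pos p j Hp). pose proof (pochhammer_pos (p + b) j ltac:(lra)).
  pose proof (fact_pos j).
  replace (x * y / 2) with (x / 2 * y) by field. rewrite Rpow_mult_distr.
  field. repeat split; lra.
Qed.

Lemma inc_beta_step_pos (p y b : R) : 0 < p -> 0 < y < 1 -> 0 < b -> 0 < inc_beta_step p y b.
Proof.
  intros Hp Hy Hb. destruct (Beta_spec p b Hp Hb) as [_ [BP _]].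
  apply Rdiv_lt_0_compat; [apply Rmult_lt_0_compat; apply Rpower_pos | now apply Rmult_lt_0_compat].
Qed.

Lemma kummer_series_increment (p x y b : R) : 0 < p -> 0 <= x -> 0 < y < 1 -> 0 < b ->
  infinite_sum (kummer_term (p + b) p (x * y / 2))
    ((ncbeta_sum p x y (b + 1) - ncbeta_sum p x y b) / inc_beta_step p y b).
Proof.
  intros Hp Hx Hy Hb. pose proof (inc_beta_step_pos p y b Hp Hy Hb).
  assert (S1 := ncbeta_sum_spec p x y (b + 1) Hp Hx Hy ltac:(lra)).
  assert (S0 := ncbeta_sum_spec p x y b Hp Hx Hy Hb).
  apply is_series_Reals in S1, S0. apply is_series_Reals.
  assert (D := is_series_scal (/ inc_beta_step p y b) _ _ (is_series_minus _ _ _ _ S1 S0)).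
  unfold scal, plus, opp in D; simpl in D; unfold mult in D; simpl in D.
  replace ((ncbeta_sum p x y (b + 1) - ncbeta_sum p x y b) / inc_beta_step p y b)
    with (/ inc_beta_step p y b * (ncbeta_sum p x y (b + 1) + - ncbeta_sum p x y b))
    by (field; lra).
  eapply is_series_ext; [|exact D]. intro n. simpl.
  change (ncbeta_term p x y (b + 1) n + - ncbeta_term p x y b n)
    with (ncbeta_term p x y (b + 1) n - ncbeta_term p x y b n).
  rewrite ncbeta_term_succ by lra. field. lra.
Qed.

Lemma kummerM_increment (p x y b : R) : 0 < p -> 0 <= x -> 0 < y < 1 -> 0 < b ->
  kummerM (p + b) p (x * y / 2)
  = (ncbeta_sum p x y (b + 1) - ncbeta_sum p x y b) / inc_beta_step p y b.
Proof. intros. apply series_value_eq, kummer_series_increment; assumption. Qed.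

(* All Kummer terms are nonnegative here and the first one is 1. *)
Lemma kummerM_ge_1 (p x y b : R) : 0 < p -> 0 <= x -> 0 < y < 1 -> 0 < b ->
  1 <= kummerM (p + b) p (x * y / 2).
Proof.
  intros Hp Hx Hy Hb. rewrite kummerM_increment by assumption.
  apply Rle_trans with (sum_f_R0 (kummer_term (p + b) p (x * y / 2)) 0);
    [simpl; unfold kummer_term; simpl; lra|].
  apply sum_incr; [exact (kummer_series_increment p x y b Hp Hx Hy Hb)|].
  intro n. unfold kummer_term.
  pose proof (pochhammer_pos p n Hp). pose proof (pochhammer_pos (p + b) n ltac:(lra)).
  pose proof (fact_pos n).
  apply Rdiv_le_0_compat; [|lra]. apply Rmult_le_pos; [apply Rdiv_le_0_compat; lra|].
  apply pow_le. assert (0 <= x * y) by nra. lra.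
Qed.

Lemma inc_beta_step_succ (p y b : R) : 0 < p -> 0 < y < 1 -> 0 < b ->
  inc_beta_step p y (b + 1) = (1 - y) * (p + b) / (b + 1) * inc_beta_step p y b.
Proof.
  intros Hp Hy Hb. destruct (Beta_recurrences p b Hp Hb) as [BR _].
  destruct (Beta_spec p b Hp Hb) as [_ [BP _]].
  unfold inc_beta_step, beta_kernel. rewrite BR, Rpower_plus, Rpower_1 by lra.
  field. repeat split; lra.
Qed.

Lemma cbar_increment (p x y q : R) : 0 < p -> 0 <= x -> 0 < y < 1 -> 1 < q ->
  cbar p q x y * (ncbeta_sum p x y q - ncbeta_sum p x y (q - 1))
  = ncbeta_sum p x y (q + 1) - ncbeta_sum p x y q.
Proof.
  intros Hp Hx Hy Hq.
  assert (M1 := kummerM_increment p x y q Hp Hx Hy ltac:(lra)).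
  assert (M0 := kummerM_increment p x y (q - 1) Hp Hx Hy ltac:(lra)).
  assert (Pos0 := kummerM_ge_1 p x y (q - 1) Hp Hx Hy ltac:(lra)).
  assert (Step := inc_beta_step_succ p y (q - 1) Hp Hy ltac:(lra)).
  pose proof (inc_beta_step_pos p y (q - 1) Hp Hy ltac:(lra)).
  replace (q - 1 + 1) with q in M0, Step by ring.
  replace (p + (q - 1)) with (p + q - 1) in M0, Pos0, Step by ring.
  unfold cbar. rewrite M1, M0 in *. rewrite Step.
  assert (ncbeta_sum p x y q - ncbeta_sum p x y (q - 1) <> 0).
  { intro Z. rewrite Z in Pos0. unfold Rdiv in Pos0. rewrite Rmult_0_l in Pos0. lra. }
  field. repeat split; lra.
Qed.

Theorem mainTheorem6 (p x y q : R) :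
  0 < p -> 0 <= x -> 0 < y < 1 -> 1 < q ->
  ncbeta p (q + 1) x y - (1 + cbar p q x y) * ncbeta p q x y
    + cbar p q x y * ncbeta p (q - 1) x y = 0 /\
  ncbeta_c p (q + 1) x y - (1 + cbar p q x y) * ncbeta_c p q x y
    + cbar p q x y * ncbeta_c p (q - 1) x y = 0.
Proof.
  intros Hp Hx Hy Hq.
  assert (Unfold : forall b, ncbeta p b x y = exp (- x / 2) * ncbeta_sum p x y b)
    by reflexivity.
  assert (Rec : ncbeta p (q + 1) x y - (1 + cbar p q x y) * ncbeta p q x y
                + cbar p q x y * ncbeta p (q - 1) x y = 0).
  { rewrite !Unfold.
    replace (exp (- x / 2) * ncbeta_sum p x y (q + 1)
             - (1 + cbar p q x y) * (exp (- x / 2) * ncbeta_sum p x y q)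
             + cbar p q x y * (exp (- x / 2) * ncbeta_sum p x y (q - 1)))
      with (exp (- x / 2) * ((ncbeta_sum p x y (q + 1) - ncbeta_sum p x y q)
             - cbar p q x y * (ncbeta_sum p x y q - ncbeta_sum p x y (q - 1)))) by ring.
    rewrite cbar_increment by assumption. ring. }
  split; [exact Rec|]. unfold ncbeta_c. lra.
Qed.
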